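(* Let $q$ be a prime power with $q\equiv 1\pmod 3$, and let $t_1\in GF(q)$ be a root of $t^2+t+1=0$. Suppose $\pi\in AGL(1,q)$, $\pi(x)=ax+r$, is not an isolated vertex of $C_A(q)$. Then the neighbors of $\pi$ in $C_A(q)$ are exactly $\sigma_1$ and $\sigma_2$, where $\sigma_1(x)=at_1x+(a-t_1)F+r(1+t_1)$ and $\sigma_2(x)=a t_1^{-1}x+(a-t_1^{-1})F+r(1+t_1^{-1})$. In particular every non-isolated vertex of $C_A(q)$ has degree $2$.
   Context: $AGL(1,q)=\{x\mapsto ax+b: a\in GF(q)\setminus\{0\}, b\in GF(q)\}$, acting on $GF(q)$. For permutations $\pi,\sigma$ of a finite set, $hd(\pi,\sigma)$ is the number of points at which they differ. Fix a distinguished element $F\in GF(q)$. For a permutation $\pi$ of $GF(q)$, $\pi^{\triangle}$ is the permutation with $\pi^{\triangle}(\pi^{-1}(F))=\pi(F)$, $\pi^{\triangle}(F)=F$, and $\pi^{\triangle}(x)=\pi(x)$ otherwise. The contraction graph $C_A(q)$ has vertex set $AGL(1,q)$, with distinct $\pi,\sigma$ adjacent iff $hd(\pi^{\triangle},\sigma^{\triangle})=q-4$. *)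

From HB Require Import structures.
From mathcomp Require Import all_boot all_order all_algebra all_fingroup all_field.
Set Implicit Arguments. Unset Strict Implicit. Unset Printing Implicit Defensive.
Import GRing.Theory.
Local Open Scope ring_scope.

Section ContractionGraph.
Variable F : finFieldType.

Definition AGL : {set {perm F}} :=
  [set p : {perm F} | [exists a : F, exists b : F,
      (a != 0) && [forall x : F, p x == a * x + b]]].

Definition hd (f g : F -> F) : nat := #|[set x : F | f x != g x]|.

Definition contr (Fd : F) (p : {perm F}) : F -> F :=
  fun x => if x == Fd then Fd
           else if x == (p^-1)%g Fd then p Fd
           else p x.

Definition adjA (Fd : F) (p s : {perm F}) : bool :=
  (p != s) && (hd (contr Fd p) (contr Fd s) == (#|F| - 4)%N).

End ContractionGraph.

From HB Require Import structures.
From mathcomp Require Import all_boot all_order all_algebra all_fingroup all_field.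
From mathcomp Require Import zify ring.
Import GRing.Theory.
Set Implicit Arguments. Unset Strict Implicit.
Local Open Scope ring_scope.

(* Write u = pi^-1 Fd and v = s^-1 Fd.  The contractions of pi and s can
   only agree at Fd, u, v and where pi and s agree, which for distinct affine
   maps happens at most once.  So pi and s are adjacent iff Fd, u, v and a
   common point of pi and s are four distinct agreements, which amounts to
   pi Fd <> Fd, s u = pi Fd and pi v = s Fd.  For affine s this says that
   s = tau o pi with tau y = pi Fd + c (y - Fd), and that tau permutes
   Fd -> pi Fd -> s Fd -> Fd cyclically, i.e. c^2 + c + 1 = 0, so c is t1
   or t1^-1.  The two neighbours differ because the characteristic is not 3. *)

Section CoverCounting.
Variable T : finType.
Implicit Types (A X E : {set T}).

Lemma card_cover A X E : A \subset X :|: E -> (#|A| <= #|X :&: A| + #|E|)%N.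
Proof.
move=> sAXE; apply: leq_trans (leq_card_setU _ _); apply: subset_leq_card.
apply/subsetP => x xA; move/subsetP/(_ x xA): sAXE.
by rewrite !inE xA andbT.
Qed.

Lemma cover_card_le A X E : A \subset X :|: E -> (#|A| <= #|X| + #|E|)%N.
Proof.
move=> /card_cover/leq_trans; apply.
by rewrite leq_add2r subset_leq_card ?subsetIl.
Qed.

Lemma cover_card_eq n A X E :
  A \subset X :|: E -> (#|X| <= n)%N -> (#|E| <= 1)%N -> #|A| = n.+1 ->
  X \subset A /\ #|X| = n.
Proof.
move=> sAXE Xn E1 An; have := card_cover sAXE; rewrite An => AI.
have IX : (#|X :&: A| <= #|X|)%N by rewrite subset_leq_card ?subsetIl.
split; last by lia.
by apply/setIidPl/eqP; rewrite eqEcard subsetIl /=; lia.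
Qed.

End CoverCounting.

Section Contraction.
Variables (F : finFieldType) (Fd : F).
Implicit Types (p s : {perm F}) (f g : F -> F).

Definition agree f g : {set F} := [set x | f x == g x].

Lemma hd_agree f g : hd f g = (#|F| - #|agree f g|)%N.
Proof.
rewrite -(cardsC (agree f g)) addKn; apply: eq_card => x.
by rewrite !inE.
Qed.

Lemma contrFd p : contr Fd p Fd = Fd.
Proof. by rewrite /contr eqxx. Qed.

Lemma contr_invFd p : p Fd != Fd -> contr Fd p ((p^-1)%g Fd) = p Fd.
Proof.
move=> pFd; rewrite /contr eqxx; case: eqP => // uFd.
by case/eqP: pFd; rewrite -{1}uFd permKV.
Qed.

Lemma contr_out p x : x != Fd -> x != (p^-1)%g Fd -> contr Fd p x = p x.
Proof. by rewrite /contr => /negbTE-> /negbTE->. Qed.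

Lemma agree_contr_sub p s :
  agree (contr Fd p) (contr Fd s) \subset
    [set:: [:: Fd; (p^-1)%g Fd; (s^-1)%g Fd]] :|: agree p s.
Proof.
apply/subsetP => x; rewrite !inE.
have [//|xFd] := eqVneq x Fd.
have [|xu] := eqVneq x ((p^-1)%g Fd); first by rewrite orbT.
have [|xv] := eqVneq x ((s^-1)%g Fd); first by rewrite !orbT.
by rewrite !contr_out.
Qed.

Lemma adjA_agree p s : (4 <= #|F|)%N ->
  adjA Fd p s = (p != s) && (#|agree (contr Fd p) (contr Fd s)| == 4%N).
Proof.
move=> F4; rewrite /adjA hd_agree; congr (_ && _).
have AF : (#|agree (contr Fd p) (contr Fd s)| <= #|F|)%N := max_card _.
by apply/eqP/eqP; lia.
Qed.

Lemma agree_contr4_conditions p s :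
  (#|agree p s| <= 1)%N -> #|agree (contr Fd p) (contr Fd s)| = 4%N ->
  [/\ p Fd != Fd, s ((p^-1)%g Fd) = p Fd & p ((s^-1)%g Fd) = s Fd].
Proof.
set u := (p^-1)%g Fd; set v := (s^-1)%g Fd => E1 A4.
have X3 : (#|[set:: [:: Fd; u; v]]| <= 3)%N by rewrite cardsE card_size.
have [sXA] := cover_card_eq (agree_contr_sub p s) X3 E1 A4.
rewrite cardsE => /card_uniqP /= /and3P [].
rewrite !inE negb_or => /andP [Fdu Fdv] uv _.
have agreeX x : x \in [set:: [:: Fd; u; v]] -> contr Fd p x = contr Fd s x.
  by move=> /(subsetP sXA); rewrite inE => /eqP.
have pFd : p Fd != Fd.
  by apply: contraNneq Fdu => pF; rewrite /u -[X in _ == (p^-1)%g X]pF permK.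
have sFd : s Fd != Fd.
  by apply: contraNneq Fdv => sF; rewrite /v -[X in _ == (s^-1)%g X]sF permK.
split=> //.
- have := agreeX u; rewrite !inE eqxx orbT => /(_ isT).
  by rewrite contr_invFd // contr_out // eq_sym.
- have := agreeX v; rewrite !inE eqxx !orbT => /(_ isT).
  by rewrite contr_invFd // contr_out // 1?eq_sym.
Qed.

Lemma agree_contr4_of_conditions p s e :
  (#|agree p s| <= 1)%N -> p Fd != Fd ->
  s ((p^-1)%g Fd) = p Fd -> p ((s^-1)%g Fd) = s Fd -> p e = s e ->
  #|agree (contr Fd p) (contr Fd s)| = 4%N.
Proof.
set u := (p^-1)%g Fd; set v := (s^-1)%g Fd => E1 pFd su pv pse.
have pu : p u = Fd by rewrite permKV.
have sv : s v = Fd by rewrite permKV.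
have sFd : s Fd != Fd.
  apply: contraNneq pFd => sF.
  have vF : v = Fd by rewrite /v -[X in (s^-1)%g X]sF permK.
  by rewrite -{1}vF pv sF.
have uFd : u != Fd by apply: contraNneq pFd => uF; rewrite -{1}uF pu.
have vFd : v != Fd by apply: contraNneq sFd => vF; rewrite -{1}vF sv.
have uv : u != v by apply: contraNneq pFd => uvE; rewrite -su uvE sv.
have eFd : e != Fd.
  by apply: contraNneq uFd => eF; apply/eqP/(@perm_inj _ s); rewrite su -{1}eF pse eF.
have eu : e != u by apply: contraNneq pFd => eU; rewrite -su -eU -pse eU pu.
have ev : e != v by apply: contraNneq sFd => eV; rewrite -pv -eV pse eV sv.
have sub : [set:: [:: Fd; u; v; e]] \subset agree (contr Fd p) (contr Fd s).
  apply/subsetP => x; rewrite !inE => /or4P [] /eqP->.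
  - by rewrite !contrFd.
  - by rewrite contr_invFd // contr_out // su.
  - by rewrite contr_invFd // contr_out ?pv // eq_sym.
  - by rewrite !contr_out // pse.
apply/eqP; rewrite eqn_leq; apply/andP; split.
- apply: leq_trans (cover_card_le (agree_contr_sub p s)) _.
  by rewrite cardsE (leq_add (card_size _) E1).
- have uX : uniq [:: Fd; u; v; e].
    by rewrite /= !inE !negb_or !(eq_sym Fd) !(eq_sym _ e) uFd vFd eFd uv eu ev.
  by apply: leq_trans (subset_leq_card sub); rewrite cardsE (card_uniqP uX).
Qed.

End Contraction.

Section CubeRoots.
Variables (F : fieldType) (c : F).
Hypothesis hc : c ^+ 2 + c + 1 = 0.

Lemma cube_root_neq0 : c != 0.
Proof. by apply/eqP => c0; move: hc; rewrite c0 expr0n /= !add0r => /eqP; rewrite oner_eq0. Qed.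

Lemma cube_root_inv : c^-1 = -1 - c.
Proof.
apply: (mulfI cube_root_neq0); rewrite mulfV ?cube_root_neq0 //.
by rewrite -[LHS]subr0 -hc; ring.
Qed.

Lemma invr_cube_root : c^-1 ^+ 2 + c^-1 + 1 = 0.
Proof. by rewrite cube_root_inv -hc; ring. Qed.

Lemma cube_root_neq1 : (3%:R : F) != 0 -> c != 1.
Proof. by apply: contraNneq => c1; apply/eqP; rewrite -hc c1; ring. Qed.

Lemma cube_root_neq_inv : (3%:R : F) != 0 -> c != c^-1.
Proof.
apply: contraNneq => cc; apply/eqP.
have h2 : 2%:R * c + 1 = 0.
  by transitivity (c - c^-1); [rewrite cube_root_inv; ring | rewrite -cc subrr].
by transitivity (4%:R * (c ^+ 2 + c + 1) - (2%:R * c + 1) ^+ 2);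
  [ring | rewrite hc h2; ring].
Qed.

Lemma cube_root_cases d : d ^+ 2 + d + 1 = 0 -> d = c \/ d = c^-1.
Proof.
move=> hd; have : (d - c) * (d - c^-1) = 0.
  by rewrite cube_root_inv -[RHS](subrr 0) -{1}hd -hc; ring.
by move/eqP; rewrite mulf_eq0 !subr_eq0 => /orP [] /eqP; [left | right].
Qed.

End CubeRoots.

Lemma natr3_neq0 (F : finFieldType) : (#|F| %% 3 = 1)%N -> (3%:R : F) != 0.
Proof.
move=> q3; apply/negP => /eqP char3.
have char3F : (3 \in [pchar F])%N by rewrite inE char3 eqxx.
move: q3 (finNzRing_gt1 F); rewrite (card_pprimeChar char3F).
by case: (logn _ _) => [|n] //; rewrite expnS modnMr.
Qed.

Section Affine.
Variable F : finFieldType.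

Lemma AGL_affine (s : {perm F}) :
  s \in AGL F -> exists b s0, forall x, s x = b * x + s0.
Proof.
rewrite inE => /existsP [b /existsP [s0 /andP [_ /forallP hs]]].
by exists b, s0 => x; apply/eqP.
Qed.

Lemma affine_perm (b s0 : F) : b != 0 ->
  {p : {perm F} | forall x, p x = b * x + s0 & p \in AGL F}.
Proof.
move=> b0; have inj : injective (fun x => b * x + s0) by move=> x y /addIr/(mulfI b0).
exists (perm inj) => [x|]; first by rewrite permE.
rewrite inE; apply/existsP; exists b; apply/existsP; exists s0.
by rewrite b0; apply/forallP => x; rewrite permE.
Qed.

Lemma agree_affine_le1 (p s : {perm F}) (a r b s0 : F) :
  (forall x, p x = a * x + r) -> (forall x, s x = b * x + s0) -> p != s ->
  (#|agree p s| <= 1)%N.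
Proof.
move=> hp hs ne; apply/card_le1_eqP => x y; rewrite !inE !hp !hs => /eqP ex /eqP ey.
have slope z : a * z + r = b * z + s0 -> (a - b) * z = s0 - r.
  by move=> e; transitivity (a * z + r - (b * z + s0) + (s0 - r)); [ring | rewrite e subrr add0r].
have ab : a - b != 0.
  rewrite subr_eq0; apply: contraNneq ne => ab; apply/eqP/permP => z.
  by rewrite hp hs -ab; move: ex; rewrite ab => /addrI ->.
by apply: (mulfI ab); rewrite !slope.
Qed.

End Affine.

Section Twist.
Variables (F : finFieldType) (Fd c : F) (pi s : {perm F}).
Hypothesis hs : forall x, s x = pi Fd + c * (pi x - Fd).

Lemma twist_conditions : c ^+ 2 + c + 1 = 0 -> c != 1 ->
  [/\ s ((pi^-1)%g Fd) = pi Fd, pi ((s^-1)%g Fd) = s Fd & exists x, pi x = s x].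
Proof.
move=> hc c1; split.
- by rewrite hs permKV subrr mulr0 addr0.
- set v := (s^-1)%g Fd; have sv : s v = Fd by rewrite permKV.
  have : c * (pi v - s Fd) = 0.
    transitivity (s v - Fd - (c ^+ 2 + c + 1) * (pi Fd - Fd)).
      by rewrite !hs; ring.
    by rewrite sv hc subrr mul0r subr0.
  by move/eqP; rewrite mulf_eq0 (negbTE (cube_root_neq0 hc)) subr_eq0 => /eqP.
- have c1' : 1 - c != 0 by rewrite subr_eq0 eq_sym.
  set y := (pi Fd - c * Fd) / (1 - c).
  exists ((pi^-1)%g y); rewrite hs permKV; apply/eqP; rewrite -subr_eq0; apply/eqP.
  by transitivity (y * (1 - c) - (pi Fd - c * Fd)); [ring | rewrite divfK // subrr].
Qed.

End Twist.

Section AffineTwist.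
Variables (F : finFieldType) (Fd a r b s0 : F) (pi s : {perm F}).
Hypotheses (a0 : a != 0) (hp : forall x, pi x = a * x + r)
  (hs : forall x, s x = b * x + s0).

Lemma affine_twist : pi Fd != Fd ->
  s ((pi^-1)%g Fd) = pi Fd -> pi ((s^-1)%g Fd) = s Fd ->
  exists2 c, c ^+ 2 + c + 1 = 0 & forall x, s x = pi Fd + c * (pi x - Fd).
Proof.
set u := (pi^-1)%g Fd; set v := (s^-1)%g Fd => pFd su pv.
have pu : pi u = Fd by rewrite permKV.
have sv : s v = Fd by rewrite permKV.
set c := b / a.
have hsc x : s x = pi Fd + c * (pi x - Fd) by rewrite -su -pu !hs !hp /c; field.
exists c => //.
have : (c ^+ 2 + c + 1) * (pi Fd - Fd) = 0.
  transitivity (s v - Fd); last by rewrite sv subrr.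
  by rewrite hsc pv hsc; ring.
by move/eqP; rewrite mulf_eq0 subr_eq0 (negbTE pFd) orbF => /eqP.
Qed.

End AffineTwist.

Section AdjacencyAffine.
Variables (F : finFieldType) (Fd a r : F) (pi : {perm F}).
Hypotheses (a0 : a != 0) (hp : forall x, pi x = a * x + r).
Hypotheses (char_neq3 : (3%:R : F) != 0) (card_ge4 : (4 <= #|F|)%N).

Lemma adjA_affineP (s : {perm F}) : s \in AGL F ->
  adjA Fd pi s <->
  pi Fd != Fd /\
  exists2 c, c ^+ 2 + c + 1 = 0 & forall x, s x = pi Fd + c * (pi x - Fd).
Proof.
move=> /AGL_affine [b [s0 hs]]; rewrite adjA_agree //; split.
- case/andP => ne /eqP A4.
  have [pFd su pv] := agree_contr4_conditions (agree_affine_le1 hp hs ne) A4.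
  split=> //; exact: affine_twist a0 hp hs pFd su pv.
- case=> pFd [c hc hsc].
  have [su pv [e pse]] := twist_conditions hsc hc (cube_root_neq1 hc char_neq3).
  have ne : pi != s by apply: contraNneq pFd => pis; rewrite -{1}su -pis permKV.
  by rewrite ne (agree_contr4_of_conditions (agree_affine_le1 hp hs ne) pFd su pv pse).
Qed.

Variable t1 : F.
Hypothesis ht : t1 ^+ 2 + t1 + 1 = 0.

Local Notation neighbour c s :=
  (forall x, s x = a * c * x + (a - c) * Fd + r * (1 + c)).

Lemma neighbourE c x :
  pi Fd + c * (pi x - Fd) = a * c * x + (a - c) * Fd + r * (1 + c).
Proof. by rewrite !hp; ring. Qed.

Lemma adjA_neighbourP (s : {perm F}) : pi Fd != Fd -> s \in AGL F ->
  adjA Fd pi s <-> neighbour t1 s \/ neighbour t1^-1 s.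
Proof.
move=> pFd sA; rewrite adjA_affineP //; split.
- case=> _ [c hc hs].
  by move: hs; case: (cube_root_cases ht hc) => -> hs; [left | right] => x;
    rewrite hs neighbourE.
- case=> hs; split=> //; [exists t1 | exists t1^-1] => //;
    rewrite ?invr_cube_root // => x; by rewrite hs neighbourE.
Qed.

Lemma card_adjA : pi Fd != Fd -> #|[set s in AGL F | adjA Fd pi s]| = 2%N.
Proof.
move=> pFd; have t0 := cube_root_neq0 ht.
have [p1 hp1 p1A] := affine_perm ((a - t1) * Fd + r * (1 + t1)) (mulf_neq0 a0 t0).
have [p2 hp2 p2A] := affine_perm ((a - t1^-1) * Fd + r * (1 + t1^-1))
  (mulf_neq0 a0 (invr_neq0 t0)).
have -> : [set s in AGL F | adjA Fd pi s] = [set p1; p2].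
  apply/setP => s; rewrite inE in_set2; apply/andP/orP.
  - case=> sA /(adjA_neighbourP pFd sA) [] hs; [left | right];
      by apply/eqP/permP => x; rewrite hs (hp1, hp2) addrA.
  - case=> /eqP ->; split; rewrite ?p1A ?p2A //; apply/adjA_neighbourP => //;
      [left | right] => x; by rewrite (hp1, hp2) addrA.
rewrite cards2; suff -> : p1 != p2 by [].
apply: contraNneq (cube_root_neq_inv ht char_neq3) => p12; apply/eqP/(mulfI a0).
by transitivity (p1 1 - p1 0); [rewrite !hp1 | rewrite p12 !hp2]; ring.
Qed.

End AdjacencyAffine.

Theorem lemma5 (F : finFieldType) (Fd t1 a r : F) (pi : {perm F}) :
  (#|F| %% 3 = 1)%N ->
  t1 ^+ 2 + t1 + 1 = 0 ->
  a != 0 ->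
  (forall x, pi x = a * x + r) ->
  (exists2 s, s \in AGL F & adjA Fd pi s) ->
  (forall s : {perm F}, s \in AGL F ->
     (adjA Fd pi s <->
        ((forall x, s x = a * t1 * x + (a - t1) * Fd + r * (1 + t1)) \/
         (forall x, s x = a * t1^-1 * x + (a - t1^-1) * Fd + r * (1 + t1^-1)))))
  /\ #|[set s in AGL F | adjA Fd pi s]| = 2%N.
Proof.
move=> q3 ht a0 hp [s1 s1A adj1].
have char_neq3 := natr3_neq0 q3.
have q1 : (1 < #|F|)%N := finNzRing_gt1 F.
have card_ge4 : (4 <= #|F|)%N by lia.
have [pFd _] := (adjA_affineP Fd a0 hp char_neq3 card_ge4 s1A).1 adj1.
split=> [s sA|].
- exact (adjA_neighbourP a0 hp char_neq3 card_ge4 ht pFd sA).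
- exact (card_adjA a0 hp char_neq3 card_ge4 ht pFd).
Qed.
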